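(* Let $d\ge2$ and let $v=(v_1,\dots,v_d)\in\mathbb{R}^d$ satisfy $\sum_j v_j=1$ and $\sum_j v_j^2=d$. Then $\|v\|_1=\sum_j|v_j|\le d$ if $d$ is odd and $\|v\|_1\le\sqrt{d^2-1}$ if $d$ is even. When $d$ is odd, equality holds if and only if $v$ has $(d+1)/2$ components equal to $1$ and $(d-1)/2$ components equal to $-1$. When $d$ is even, equality holds if and only if $v$ has $d/2$ components equal to $(1+\sqrt{d^2-1})/d$ and $d/2$ components equal to $(1-\sqrt{d^2-1})/d$. *)

From mathcomp Require Import all_boot all_order all_algebra.
Set Implicit Arguments. Unset Strict Implicit. Unset Printing Implicit Defensive.
Import Order.TTheory GRing.Theory Num.Theory.
Local Open Scope ring_scope.

Definition norm1 (R : numDomainType) (d : nat) (v : 'I_d -> R) : R :=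
  \sum_(j < d) `|v j|.

Definition ncomp (R : numDomainType) (d : nat) (v : 'I_d -> R) (a : R) : nat :=
  #|[set j : 'I_d | v j == a]|.

(* Put s_j = sgn v_j (with sgn 0 = 1), so that |v|_1 = sum_j s_j v_j, and
   t = sum_j s_j = #{v_j >= 0} - #{v_j < 0}.  Expanding
   0 <= sum_j (v_j - g - e s_j)^2 gives a quadratic inequality in g and e.
   For g = 0, e = 1 it reads 2 (d - |v|_1) >= 0.  Minimising over g and taking
   the discriminant in e gives (d |v|_1 - t)^2 <= (d^2 - t^2)(d^2 - 1); for
   even d the integer t is even, and this forces |v|_1 <= sqrt (d^2 - 1) with
   equality only when t = 0.  In the equality cases the sum of squares
   vanishes, so v_j = g + e s_j takes exactly the two stated values. *)

From mathcomp Require Import all_boot all_order all_algebra ring lra zify.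
Import Order.TTheory GRing.Theory Num.Theory.
Set Implicit Arguments. Unset Strict Implicit. Unset Printing Implicit Defensive.
Local Open Scope ring_scope.

Section SignDecomposition.
Variables (R : realFieldType) (d : nat).
Implicit Types (v : 'I_d -> R) (x y a b g e : R).

Definition sgn x : R := if 0 <= x then 1 else -1.

Definition nonneg_idx v : {set 'I_d} := [set j | 0 <= v j].

Lemma normr_sgn x : `|x| = x * sgn x.
Proof.
rewrite /sgn; case: ifP => [/ger0_norm -> | /negbT]; first by rewrite mulr1.
by rewrite -ltNge => /ltr0_norm ->; rewrite mulrN1.
Qed.

Lemma sqr_sgn x : sgn x ^+ 2 = 1.
Proof. by rewrite /sgn; case: ifP; rewrite ?sqrrN expr1n. Qed.

Lemma sum_sgn v :
  \sum_j sgn (v j) = #|nonneg_idx v|%:R - #|~: nonneg_idx v|%:R.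
Proof.
rewrite (bigID (mem (nonneg_idx v))) /=.
rewrite (eq_bigr (fun=> 1)) => [|j]; last by rewrite inE /sgn => ->.
rewrite [X in _ + X](eq_bigr (fun=> -1)) => [|j]; last by rewrite inE /sgn => /negbTE ->.
rewrite !sumr_const mulNrn; congr (_ + - _).
by apply: congr1; apply: eq_card => j; rewrite !inE unfold_in inE.
Qed.

Lemma sum_sgn_sqr_le v : (\sum_j sgn (v j)) ^+ 2 <= d%:R ^+ 2.
Proof.
have card_d : d = (#|nonneg_idx v| + #|~: nonneg_idx v|)%N.
  by rewrite cardsC card_ord.
rewrite sum_sgn [in leRHS]card_d natrD.
by have := ler0n R #|nonneg_idx v|; have := ler0n R #|~: nonneg_idx v|; nra.
Qed.

Lemma sum_sqr_sub_sgn v g e :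
  \sum_j (v j - g - e * sgn (v j)) ^+ 2 =
  \sum_j v j ^+ 2 - 2 * g * \sum_j v j - 2 * e * norm1 v
  + d%:R * (g ^+ 2 + e ^+ 2) + 2 * g * e * \sum_j sgn (v j).
Proof.
transitivity (\sum_j (v j ^+ 2 - 2 * g * v j - 2 * e * `|v j|
                      + (g ^+ 2 + e ^+ 2) + 2 * g * e * sgn (v j))).
  apply: eq_bigr => j _; rewrite normr_sgn.
  by rewrite -[e ^+ 2 in RHS]mulr1 -[X in e ^+ 2 * X](sqr_sgn (v j)); ring.
rewrite !big_split /= !sumrN !sumr_const card_ord -!mulr_sumr /norm1; ring.
Qed.

Lemma sum_sqr_eq0 (F : 'I_d -> R) : \sum_j F j ^+ 2 = 0 -> forall j, F j = 0.
Proof.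
move=> /psumr_eq0P F0 j; apply/eqP; rewrite -sqrf_eq0.
by apply/eqP/F0 => // i _; apply: sqr_ge0.
Qed.

Lemma ncomp_affine_sgn v a b : b != 0 -> (forall j, v j = a + b * sgn (v j)) ->
  ncomp v (a + b) = #|nonneg_idx v| /\ ncomp v (a - b) = #|~: nonneg_idx v|.
Proof.
move=> b0 v_affine; have ab : (a + b == a - b) = false.
  by apply/negbTE/eqP => ab; move/eqP: b0; apply; lra.
split; apply: eq_card => j; rewrite !inE {1}v_affine /sgn;
  by case: ifP; rewrite ?mulr1 ?mulrN1 ?eqxx // ?ab // eq_sym ab.
Qed.

Lemma sum_two_valued v x y (F : R -> R) : x != y ->
  (ncomp v x + ncomp v y)%N = d ->
  \sum_j F (v j) = F x *+ ncomp v x + F y *+ ncomp v y.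
Proof.
move=> xy card_xy; set A := [set j | v j == x]; set B := [set j | v j == y].
have AB0 : A :&: B = set0.
  apply/setP => j; rewrite !inE; apply/andP => -[/eqP vx /eqP vy].
  by move/eqP: xy; apply; rewrite -vx -vy.
have AB : A :|: B = setT.
  apply/eqP; rewrite eqEcard subsetT cardsT card_ord cardsU AB0 cards0 subn0.
  by move: card_xy; rewrite /ncomp -/A -/B => ->; rewrite leqnn.
rewrite (bigID (fun j => j \in A)) /=; congr (_ + _).
  by rewrite (eq_bigr (fun=> F x)) ?sumr_const // => j; rewrite inE => /eqP ->.
rewrite (eq_bigl (fun j => j \in B)) => [|j]; last first.
  move/setP/(_ j): AB; rewrite !inE /=.
  by case: eqP => [vx _|_ /= ->]; rewrite // vx (negbTE xy).
by rewrite (eq_bigr (fun=> F y)) ?sumr_const // => j; rewrite inE => /eqP ->.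
Qed.

End SignDecomposition.

Lemma quadratic_ge0_discr (R : realFieldType) (a b c : R) : 0 <= a ->
  (forall x, 0 <= a * x ^+ 2 + 2 * b * x + c) -> b ^+ 2 <= a * c.
Proof.
rewrite le_eqVlt => /predU1P[<- q_ge0 | a_gt0 q_ge0].
  have [-> | b0] := eqVneq b 0; first by rewrite expr0n mul0r.
  have := q_ge0 (- (c + 1) / (2 * b)).
  have -> : 0 * (- (c + 1) / (2 * b)) ^+ 2 + 2 * b * (- (c + 1) / (2 * b)) + c = -1.
    by field.
  by rewrite ler0N1.
have := q_ge0 (- b / a).
have -> : a * (- b / a) ^+ 2 + 2 * b * (- b / a) + c = (a * c - b ^+ 2) / a.
  by field; rewrite gt_eqF.
by rewrite pmulr_lge0 ?invr_gt0 // subr_ge0.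
Qed.

Lemma sqrt_sqr_sub1 (R : rcfType) (D : R) : 2 <= D ->
  Num.sqrt (D ^+ 2 - 1) ^+ 2 = D ^+ 2 - 1 /\ 1 < Num.sqrt (D ^+ 2 - 1) < D.
Proof.
move=> D_ge2; set r := Num.sqrt _.
have r2 : r ^+ 2 = D ^+ 2 - 1 by rewrite sqr_sqrtr //; nra.
have r_ge0 : 0 <= r := sqrtr_ge0 _.
by split=> //; apply/andP; split; nra.
Qed.

Lemma discr_le_sqrt (R : rcfType) (D t L : R) : 2 <= D -> t ^+ 2 <= D ^+ 2 ->
  (t = 0 \/ 2 <= `|t|) ->
  (D * L - t) ^+ 2 <= (D ^+ 2 - t ^+ 2) * (D ^+ 2 - 1) ->
  L <= Num.sqrt (D ^+ 2 - 1) /\ (L = Num.sqrt (D ^+ 2 - 1) -> t = 0).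
Proof.
move=> D_ge2 tD t_gap discr.
have [r2 /andP[r_gt1 r_ltD]] := sqrt_sqr_sub1 D_ge2.
set r := Num.sqrt _ in r2 r_gt1 r_ltD *.
suff ge_r : r <= L -> t = 0 /\ L = r.
  split=> [|Lr]; last by case: ge_r; rewrite Lr.
  by case: (leP r L) => [/ge_r[_ ->] | /ltW].
move=> r_leL; have t_leD : t <= D by nra.
have Dr_t : 0 <= D * r - t by nra.
have DL_Dr : D * r <= D * L by rewrite ler_pM2l //; lra.
have t_sign : t * (t * D - 2 * r) <= 0.
  have : (D * r - t) ^+ 2 <= (D ^+ 2 - t ^+ 2) * r ^+ 2.
    rewrite r2; apply: le_trans discr; nra.
  rewrite -subr_le0.
  have -> : (D * r - t) ^+ 2 - (D ^+ 2 - t ^+ 2) * r ^+ 2 =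
            D * (t * (t * D - 2 * r)) + t ^+ 2 * (r ^+ 2 - (D ^+ 2 - 1)) by ring.
  by rewrite r2 subrr mulr0 addr0 pmulr_rle0 //; lra.
case: t_gap => [t0 | t_gap].
  split=> //; apply/eqP; rewrite eq_le r_leL andbT.
  move: discr; rewrite t0 subr0 expr0n subr0 -r2 -exprMn ler_sqr ?nnegrE.
  - by rewrite ler_pM2l //; lra.
  - by apply: mulr_ge0; lra.
  - by apply: mulr_ge0; lra.
suff : 0 < t * (t * D - 2 * r) by rewrite ltNge t_sign.
move: t_gap; rewrite ler_normr => /orP[t_ge2 | t_le_m2].
  by apply: mulr_gt0; nra.
by rewrite nmulr_rgt0; nra.
Qed.

Lemma natr_sub_gap (R : realDomainType) (p q : nat) : ~~ odd (p + q) ->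
  p%:R - q%:R = 0 :> R \/ 2 <= `|p%:R - q%:R : R|.
Proof.
move=> pq_even; have [-> | gap] : p = q \/ (q + 2 <= p \/ p + 2 <= q)%N by lia.
  by left; rewrite subrr.
right; rewrite ler_normr; apply/orP.
by case: gap => h; [left | right]; move: h; rewrite -(ler_nat R) natrD; lra.
Qed.

Section UnitSumSquareSum.
Variables (R : rcfType) (d : nat) (v : 'I_d -> R).
Hypotheses (sum_v : \sum_j v j = 1) (sum_v2 : \sum_j v j ^+ 2 = d%:R).

Local Notation D := (d%:R : R).
Local Notation r := (Num.sqrt (D ^+ 2 - 1)).
Local Notation p := #|nonneg_idx v|.
Local Notation q := #|~: nonneg_idx v|.
Local Notation t := (\sum_j sgn (v j)).

Lemma card_nonneg_idxC : (p + q)%N = d.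
Proof. by rewrite cardsC card_ord. Qed.

Lemma sum_sqr_sub_sgn1 : \sum_j (v j - sgn (v j)) ^+ 2 = 2 * (D - norm1 v).
Proof.
transitivity (\sum_j (v j - 0 - 1 * sgn (v j)) ^+ 2).
  by apply: eq_bigr => j _; rewrite subr0 mul1r.
by rewrite sum_sqr_sub_sgn sum_v sum_v2; ring.
Qed.

Lemma norm1_le_dim : norm1 v <= D.
Proof.
have : 0 <= \sum_j (v j - sgn (v j)) ^+ 2 by apply: sumr_ge0 => j _; apply: sqr_ge0.
by rewrite sum_sqr_sub_sgn1 pmulr_rge0 // subr_ge0.
Qed.

Lemma norm1_eq_dim_ncomp : norm1 v = D ->
  (ncomp v 1 = d.+1./2 /\ ncomp v (-1) = d.-1./2)%N.
Proof.
move=> L_D; have v_sgn j : v j = sgn (v j).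
  apply/eqP; rewrite -subr_eq0; apply/eqP; move: j; apply: sum_sqr_eq0.
  by rewrite sum_sqr_sub_sgn1 L_D subrr mulr0.
have v_affine j : v j = 0 + 1 * sgn (v j) by rewrite add0r mul1r -v_sgn.
have [] := ncomp_affine_sgn (oner_neq0 R) v_affine; rewrite add0r sub0r => -> ->.
have : p%:R - q%:R = 1 :> R.
  by rewrite -sum_sgn -sum_v; apply: eq_bigr => j _; rewrite -v_sgn.
move/eqP; rewrite subr_eq addrC natr1 eqr_nat => /eqP.
by have := card_nonneg_idxC; lia.
Qed.

Lemma norm1_discr (d_gt0 : (0 < d)%N) :
  (D * norm1 v - t) ^+ 2 <= (D ^+ 2 - t ^+ 2) * (D ^+ 2 - 1).
Proof.
rewrite -sqrrN opprB; apply: quadratic_ge0_discr.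
  by rewrite subr_ge0 sum_sgn_sqr_le.
move=> e; have D_gt0 : 0 < D by rewrite ltr0n.
(* the value of g minimising the quadratic form below *)
pose g := (1 - e * t) / D.
have : 0 <= \sum_j (v j - g - e * sgn (v j)) ^+ 2.
  by apply: sumr_ge0 => j _; apply: sqr_ge0.
rewrite sum_sqr_sub_sgn sum_v sum_v2.
have -> : D - 2 * g * 1 - 2 * e * norm1 v + D * (g ^+ 2 + e ^+ 2) + 2 * g * e * t =
  ((D ^+ 2 - t ^+ 2) * e ^+ 2 + 2 * (t - D * norm1 v) * e + (D ^+ 2 - 1)) / D.
  by rewrite /g; field; rewrite gt_eqF.
by rewrite pmulr_lge0 ?invr_gt0.
Qed.

Lemma norm1_le_sqrt (d_ge2 : (2 <= d)%N) (d_even : ~~ odd d) :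
  norm1 v <= r /\ (norm1 v = r -> t = 0).
Proof.
apply: discr_le_sqrt; first by rewrite ler_nat.
- exact: sum_sgn_sqr_le.
- by rewrite sum_sgn; apply: natr_sub_gap; rewrite card_nonneg_idxC.
- exact: norm1_discr (ltnW d_ge2).
Qed.

Lemma norm1_eq_sqrt_ncomp (d_ge2 : (2 <= d)%N) (d_even : ~~ odd d) :
  norm1 v = r -> (ncomp v ((1 + r) / D) = d./2 /\ ncomp v ((1 - r) / D) = d./2)%N.
Proof.
move=> L_r; have t0 := (norm1_le_sqrt d_ge2 d_even).2 L_r.
have D_ge2 : 2 <= D by rewrite ler_nat.
have [r2 /andP[r_gt1 _]] := sqrt_sqr_sub1 D_ge2.
have v_affine j : v j = 1 / D + r / D * sgn (v j).
  apply/eqP; rewrite -subr_eq0 opprD addrA; apply/eqP; move: j; apply: sum_sqr_eq0.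
  rewrite sum_sqr_sub_sgn sum_v sum_v2 t0 L_r.
  have -> : D - 2 * (1 / D) * 1 - 2 * (r / D) * r + D * ((1 / D) ^+ 2 + (r / D) ^+ 2)
            + 2 * (1 / D) * (r / D) * 0 = (D ^+ 2 - 1 - r ^+ 2) / D.
    by field; rewrite gt_eqF //; lra.
  by rewrite r2 subrr mul0r.
have rD0 : r / D != 0 by rewrite mulf_neq0 ?invr_eq0 ?gt_eqF //; lra.
have [] := ncomp_affine_sgn rD0 v_affine; rewrite -mulrDl -mulrBl => -> ->.
move: t0; rewrite sum_sgn => /eqP; rewrite subr_eq0 eqr_nat => /eqP.
by have := card_nonneg_idxC; lia.
Qed.

End UnitSumSquareSum.

Lemma ncomp_odd_norm1 (R : realFieldType) (d : nat) (v : 'I_d -> R) : odd d ->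
  (ncomp v 1 = d.+1./2 /\ ncomp v (-1) = d.-1./2)%N -> norm1 v = d%:R.
Proof.
move=> d_odd [c1 c2]; have card_d : (ncomp v 1 + ncomp v (-1))%N = d by lia.
have ne : (1 : R) != -1 by rewrite gt_eqF // (lt_trans (ltrN10 R) ltr01).
by rewrite /norm1 (sum_two_valued _ ne card_d) normrN normr1 -mulrnDr card_d.
Qed.

Lemma ncomp_even_norm1 (R : rcfType) (d : nat) (v : 'I_d -> R) :
  (2 <= d)%N -> ~~ odd d ->
  let r := Num.sqrt (d%:R ^+ 2 - 1) in
  (ncomp v ((1 + r) / d%:R) = d./2 /\ ncomp v ((1 - r) / d%:R) = d./2)%N ->
  norm1 v = r.
Proof.
move=> d_ge2 d_even r [c1 c2].
have D_ge2 : 2 <= d%:R :> R by rewrite ler_nat.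
have [r2 /andP[r_gt1 _]] := sqrt_sqr_sub1 D_ge2; rewrite -/r in r2 r_gt1.
have x_gt0 : 0 < (1 + r) / d%:R by rewrite divr_gt0 //; lra.
have y_lt0 : (1 - r) / d%:R < 0 by rewrite pmulr_llt0 ?invr_gt0 //; lra.
have ne : (1 + r) / d%:R != (1 - r) / d%:R by rewrite gt_eqF // (lt_trans y_lt0).
have card_d : (ncomp v ((1 + r) / d%:R) + ncomp v ((1 - r) / d%:R))%N = d.
  by rewrite c1 c2 addnn even_halfK.
rewrite /norm1 (sum_two_valued _ ne card_d) c1 c2 gtr0_norm // ltr0_norm //.
have half_gt0 : (0 < d./2)%N by lia.
have d_half : d%:R = d./2%:R * 2 :> R by rewrite -natrM muln2 even_halfK.
rewrite -mulrnDl -mulr_natr d_half; field.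
by rewrite pnatr_eq0 -lt0n.
Qed.

Theorem lemmaS2 (R : rcfType) (d : nat) (v : 'I_d -> R) :
  (2 <= d)%N ->
  \sum_(j < d) v j = 1 ->
  \sum_(j < d) v j ^+ 2 = d%:R ->
  (odd d ->
     norm1 v <= d%:R /\
     (norm1 v = d%:R <->
        (ncomp v 1 = d.+1./2 /\ ncomp v (-1) = d.-1./2)%N)) /\
  (~~ odd d ->
     norm1 v <= Num.sqrt (d%:R ^+ 2 - 1) /\
     (norm1 v = Num.sqrt (d%:R ^+ 2 - 1) <->
        (ncomp v ((1 + Num.sqrt (d%:R ^+ 2 - 1)) / d%:R) = d./2 /\
         ncomp v ((1 - Num.sqrt (d%:R ^+ 2 - 1)) / d%:R) = d./2)%N)).
Proof.
move=> d_ge2 sum_v sum_v2; split=> [d_odd | d_even].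
  split; first exact: norm1_le_dim.
  by split; [exact: norm1_eq_dim_ncomp | exact: ncomp_odd_norm1].
split; first by case: (norm1_le_sqrt sum_v sum_v2 d_ge2 d_even).
by split; [exact: norm1_eq_sqrt_ncomp | exact: ncomp_even_norm1].
Qed.
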